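(* Let $G$ be a finite saturable graph with diameter at most $2$. Then $G$ is supersaturable.
   Context: For a simple graph $G$ and a positive integer $k$, a proper $k$-total difference labeling (TDL) of $G$ is a function $f: V(G)\to\{1,\dots,k\}$, extended to edges by $f(\{u,v\}) = |f(u)-f(v)|$, such that: (i) adjacent vertices receive different labels; (ii) two distinct edges sharing a vertex receive different labels; (iii) no edge receives the same label as either of its endpoints. $\chi_{td}(G)$ denotes the smallest $k$ for which such a labeling exists. A TDL of a graph $G$ of order $n$ is saturated if $\chi_{td}(G)=n$ and the set of vertex labels used is exactly $\{1,2,\dots,\chi_{td}(G)\}$. $G$ is saturable if it has at least one saturated labeling, and supersaturable if every proper $\chi_{td}(G)$-total difference labeling of $G$ is saturated. *)

From mathcomp Require Import all_boot.
Set Implicit Arguments. Unset Strict Implicit. Unset Printing Implicit Defensive.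

Definition simple_graph (T : finType) (e : rel T) : Prop :=
  symmetric e /\ irreflexive e.

Definition absdiff (a b : nat) : nat := (a - b) + (b - a).

Definition is_TDL (T : finType) (e : rel T) (k : nat) (f : T -> nat) : Prop :=
  [/\ (forall x, 1 <= f x <= k),
      (forall u v, e u v -> f u != f v),
      (forall u v w, e u v -> e u w -> v != w ->
                     absdiff (f u) (f v) != absdiff (f u) (f w))
    & (forall u v, e u v ->
         (absdiff (f u) (f v) != f u) && (absdiff (f u) (f v) != f v))].

Definition is_chi_td (T : finType) (e : rel T) (k : nat) : Prop :=
  [/\ 0 < k, (exists f, is_TDL e k f)
    & (forall k', 0 < k' < k -> forall f, ~ is_TDL e k' f)].

Definition saturated (T : finType) (e : rel T) (f : T -> nat) : Prop :=
  is_chi_td e #|T| /\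
  (forall i, (exists x, f x = i) <-> 1 <= i <= #|T|).

Definition saturable (T : finType) (e : rel T) : Prop :=
  exists f, is_TDL e #|T| f /\ saturated e f.

Definition supersaturable (T : finType) (e : rel T) : Prop :=
  forall k, is_chi_td e k -> forall f, is_TDL e k f -> saturated e f.

Definition diam_le2 (T : finType) (e : rel T) : Prop :=
  forall u v, u != v -> e u v \/ exists w, e u w /\ e w v.

(* A proper TDL separates adjacent vertices by (i), and two vertices with a
   common neighbour w by (ii), since equal labels would give equal labels to
   the two edges at w.  In diameter at most 2 this makes every proper TDL
   injective.  Saturability forces chi_td = n, so a proper chi_td-TDL is an
   injection of the n vertices into {1..n}, hence uses every label. *)
From mathcomp Require Import all_boot.

Lemma is_chi_td_unique {T : finType} {e : rel T} {k1 k2 : nat} :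
  is_chi_td e k1 -> is_chi_td e k2 -> k1 = k2.
Proof.
move=> [k1_gt0 [f1 tdl1] min1] [k2_gt0 [f2 tdl2] min2].
case: (ltngtP k1 k2) => // [lt12 | lt21].
- by case: (min2 k1 _ f1); rewrite ?k1_gt0.
- by case: (min1 k2 _ f2); rewrite ?k2_gt0.
Qed.

Lemma diam_le2_TDL_inj {T : finType} {e : rel T} {k : nat} {f : T -> nat} :
  symmetric e -> diam_le2 e -> is_TDL e k f -> injective f.
Proof.
move=> esym diam [_ adj_neq inc_neq _] x y fxy.
case: (eqVneq x y) => // x_neq_y.
case: (diam x y x_neq_y) => [exy | [w [exw ewy]]].
  by move: (adj_neq x y exy); rewrite fxy eqxx.
rewrite esym in exw.
by move: (inc_neq w x y exw ewy x_neq_y); rewrite fxy eqxx.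
Qed.

Lemma inj_bounded_surj (T : finType) (f : T -> nat) :
  injective f -> (forall x, 1 <= f x <= #|T|) ->
  forall i, 1 <= i <= #|T| -> exists x, f x = i.
Proof.
move=> f_inj f_range i i_range.
set s := [seq f x | x <- enum T].
have s_uniq : uniq s by rewrite map_inj_uniq ?enum_uniq.
have s_sub : {subset s <= iota 1 #|T|}.
  by move=> j /mapP [x _ ->]; rewrite mem_iota add1n ltnS.
have size_le : size (iota 1 #|T|) <= size s by rewrite size_map -cardE size_iota.
have [_ s_eq] := uniq_min_size s_uniq s_sub size_le.
have : i \in s by rewrite s_eq mem_iota add1n ltnS.
by case/mapP => x _ ->; exists x.
Qed.

Theorem mainTheorem12 (T : finType) (e : rel T) :
  simple_graph e -> diam_le2 e -> saturable e -> supersaturable e.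
Proof.
move=> [esym _] diam [_ [_ [chi_n _]]] k chi_k f tdl.
have k_eq_n := is_chi_td_unique chi_k chi_n; subst k.
have f_inj := diam_le2_TDL_inj esym diam tdl.
have [f_range _ _ _] := tdl.
split=> // i; split; first by case=> x <-.
exact: inj_bounded_surj.
Qed.
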